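(* (The translation from $\lambda_{\mathrm{act}}$ to $\lambda_{\mathrm{ch}}$ preserves typing of terms and values.) (1) If $\Gamma \vdash V : A$ in $\lambda_{\mathrm{act}}$, then $[\![\Gamma]\!] \vdash [\![V]\!] : [\![A]\!]$ in $\lambda_{\mathrm{ch}}$. (2) If $\Gamma \mid B \vdash M : A$ in $\lambda_{\mathrm{act}}$, then $[\![\Gamma]\!], \alpha : \mathsf{Chan}([\![B]\!]) \vdash [\![M]\!]\alpha : [\![A]\!]$ in $\lambda_{\mathrm{ch}}$ (for $\alpha$ a variable or name not in $\Gamma$).
   Context: $\lambda_{\mathrm{ch}}$: types $A,B ::= \mathbf{1}\mid A\to B\mid\mathsf{Chan}(A)$; values $V ::= \alpha\mid\lambda x.M\mid()$ ($\alpha$ a variable or name); computations $M ::= V\,W\mid\mathbf{let}\ x\Leftarrow M\ \mathbf{in}\ N\mid\mathbf{return}\ V\mid\mathbf{fork}\ M\mid\mathbf{give}\ V\ W\mid\mathbf{take}\ V\mid\mathbf{newCh}$; typing $\Gamma\vdash M:A$: simple typing for variables/names, $\lambda$, application, $\mathbf{let}$ ($\Gamma\vdash M:A$, $\Gamma,x:A\vdash N:B$), $\mathbf{return}\ V:A$ for $V:A$, $():\mathbf 1$; $\mathbf{give}\ V\ W:\mathbf 1$ if $V:A$, $W:\mathsf{Chan}(A)$; $\mathbf{take}\ V:A$ if $V:\mathsf{Chan}(A)$; $\mathbf{fork}\ M:\mathbf 1$ if $M:\mathbf 1$; $\mathbf{newCh}:\mathsf{Chan}(A)$ for any $A$. $\lambda_{\mathrm{act}}$: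 types $A,B,C ::= \mathbf{1}\mid A\xrightarrow{C}B\mid\mathsf{ActorRef}(A)$; values as in $\lambda_{\mathrm{ch}}$; computations $M ::= V\,W\mid\mathbf{let}\ x\Leftarrow M\ \mathbf{in}\ N\mid\mathbf{return}\ V\mid\mathbf{spawn}\ M\mid\mathbf{send}\ V\ W\mid\mathbf{receive}\mid\mathbf{self}$. Value typing: $\alpha:A$ if $\alpha:A\in\Gamma$; $\Gamma\vdash\lambda x.M:A\xrightarrow{C}B$ if $\Gamma,x:A\mid C\vdash M:B$; $():\mathbf 1$. Computation typing $\Gamma\mid C\vdash M:A$: $V\,W:B$ if $V:A\xrightarrow{C}B$, $W:A$; $\mathbf{let}$ with both parts under mailbox type $C$; $\mathbf{return}\ V:A$ if $V:A$; $\mathbf{send}\ V\ W:\mathbf 1$ if $V:A$, $W:\mathsf{ActorRef}(A)$; $\Gamma\mid A\vdash\mathbf{receive}:A$; $\Gamma\mid C\vdash\mathbf{spawn}\ M:\mathsf{ActorRef}(A)$ if $\Gamma\mid A\vdash M:\mathbf 1$; $\Gamma\mid A\vdash\mathbf{self}:\mathsf{ActorRef}(A)$. The translation $[\![-]\!]$ from $\lambda_{\mathrm{act}}$ into $\lambda_{\mathrm{ch}}$: on types, $[\![\mathsf{ActorRef}(A)]\!]=\mathsf{Chan}([\![A]\!])$, $[\![A\xrightarrow{C}B]\!]=[\![A]\!]\to\mathsf{Chan}([\![C]\!])\to[\![B]\!]$, $[\![\mathbf 1]\!]=\mathbf 1$; on environments pointwise, $[\![\alpha_1:A_1,\ldots,\alpha_n:A_n]\!]=\alpha_1:[\![A_1]\!],\ldots,\alpha_n:[\![A_n]\!]$;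 on values, $[\![x]\!]=x$, $[\![a]\!]=a$, $[\![()]\!]=()$, $[\![\lambda x.M]\!]=\lambda x.\lambda ch.([\![M]\!]ch)$. On computations, parameterised by a channel $ch$ (the emulated mailbox): $[\![\mathbf{let}\ x\Leftarrow M\ \mathbf{in}\ N]\!]ch=\mathbf{let}\ x\Leftarrow[\![M]\!]ch\ \mathbf{in}\ [\![N]\!]ch$; $[\![V\,W]\!]ch=\mathbf{let}\ f\Leftarrow([\![V]\!]\,[\![W]\!])\ \mathbf{in}\ f\,ch$; $[\![\mathbf{return}\ V]\!]ch=\mathbf{return}\ [\![V]\!]$; $[\![\mathbf{self}]\!]ch=\mathbf{return}\ ch$; $[\![\mathbf{receive}]\!]ch=\mathbf{take}\ ch$; $[\![\mathbf{spawn}\ M]\!]ch=\mathbf{let}\ chMb\Leftarrow\mathbf{newCh}\ \mathbf{in}\ \mathbf{fork}([\![M]\!]chMb);\ \mathbf{return}\ chMb$; $[\![\mathbf{send}\ V\ W]\!]ch=\mathbf{give}\ [\![V]\!]\ [\![W]\!]$. Here $M;N$ abbreviates $\mathbf{let}\ y\Leftarrow M\ \mathbf{in}\ N$ with $y$ fresh. *)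

(* Locally nameless representation:
   bound variables are de Bruijn indices, free identifiers alpha
   (variables x and names a) are atoms of type [ident]. *)
From Stdlib Require Import List Arith.
Import ListNotations.

Inductive ident : Type :=
| Var (n : nat)
| Nm  (n : nat).

Definition ident_eq_dec (a b : ident) : {a = b} + {a <> b}.
Proof. decide equality; apply Nat.eq_dec. Defined.

Fixpoint lookup {T : Type} (G : list (ident * T)) (a : ident) : option T :=
  match G with
  | [] => None
  | (b, t) :: G' => if ident_eq_dec a b then Some t else lookup G' a
  end.

Definition dom {T : Type} (G : list (ident * T)) : list ident := map fst G.

Inductive aty : Type :=
| AUnit : aty
| AFun : aty -> aty -> aty -> aty   (* AFun A C B  =  A -C-> B *)
| ARef : aty -> aty.

Inductive aval : Type :=
| aB : nat -> aval
| aF : ident -> aval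
| aLam : acomp -> aval
| aUnit : aval
with acomp : Type :=
| aApp : aval -> aval -> acomp
| aLet : acomp -> acomp -> acomp   (* let x <= M in N ; N binds index 0 *)
| aRet : aval -> acomp
| aSpawn : acomp -> acomp
| aSend : aval -> aval -> acomp
| aReceive : acomp
| aSelf : acomp.

Fixpoint aopen_v (k : nat) (u : aval) (V : aval) : aval :=
  match V with
  | aB n => if Nat.eqb n k then u else aB n
  | aF a => aF a
  | aLam M => aLam (aopen_c (S k) u M)
  | aUnit => aUnit
  end
with aopen_c (k : nat) (u : aval) (M : acomp) : acomp :=
  match M with
  | aApp V W => aApp (aopen_v k u V) (aopen_v k u W)
  | aLet M N => aLet (aopen_c k u M) (aopen_c (S k) u N)
  | aRet V => aRet (aopen_v k u V)
  | aSpawn M => aSpawn (aopen_c k u M)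
  | aSend V W => aSend (aopen_v k u V) (aopen_v k u W)
  | aReceive => aReceive
  | aSelf => aSelf
  end.

Definition actx := list (ident * aty).

Inductive avtyp : actx -> aval -> aty -> Prop :=
| avt_id : forall G a A, lookup G a = Some A -> avtyp G (aF a) A
| avt_lam : forall G M A C B,
    (forall x, ~ In (Var x) (dom G) ->
       actyp ((Var x, A) :: G) C (aopen_c 0 (aF (Var x)) M) B) ->
    avtyp G (aLam M) (AFun A C B)
| avt_unit : forall G, avtyp G aUnit AUnit
with actyp : actx -> aty -> acomp -> aty -> Prop :=
| act_app : forall G C V W A B,
    avtyp G V (AFun A C B) -> avtyp G W A -> actyp G C (aApp V W) B
| act_let : forall G C M N A B,
    actyp G C M A ->
    (forall x, ~ In (Var x) (dom G) ->
       actyp ((Var x, A) :: G) C (aopen_c 0 (aF (Var x)) N) B) ->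
    actyp G C (aLet M N) B
| act_ret : forall G C V A, avtyp G V A -> actyp G C (aRet V) A
| act_send : forall G C V W A,
    avtyp G V A -> avtyp G W (ARef A) -> actyp G C (aSend V W) AUnit
| act_receive : forall G A, actyp G A aReceive A
| act_spawn : forall G C M A,
    actyp G A M AUnit -> actyp G C (aSpawn M) (ARef A)
| act_self : forall G A, actyp G A aSelf (ARef A).

Inductive cty : Type :=
| CUnit : cty
| CFun : cty -> cty -> cty
| CChan : cty -> cty.

Inductive cval : Type :=
| cB : nat -> cval
| cF : ident -> cval
| cLam : ccomp -> cval
| cUnit : cval
with ccomp : Type :=
| cApp : cval -> cval -> ccomp
| cLet : ccomp -> ccomp -> ccomp
| cRet : cval -> ccomp
| cFork : ccomp -> ccomp
| cGive : cval -> cval -> ccomp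
| cTake : cval -> ccomp
| cNewCh : ccomp.

Fixpoint copen_v (k : nat) (u : cval) (V : cval) : cval :=
  match V with
  | cB n => if Nat.eqb n k then u else cB n
  | cF a => cF a
  | cLam M => cLam (copen_c (S k) u M)
  | cUnit => cUnit
  end
with copen_c (k : nat) (u : cval) (M : ccomp) : ccomp :=
  match M with
  | cApp V W => cApp (copen_v k u V) (copen_v k u W)
  | cLet M N => cLet (copen_c k u M) (copen_c (S k) u N)
  | cRet V => cRet (copen_v k u V)
  | cFork M => cFork (copen_c k u M)
  | cGive V W => cGive (copen_v k u V) (copen_v k u W)
  | cTake V => cTake (copen_v k u V)
  | cNewCh => cNewCh
  end.

Definition cctx := list (ident * cty).

Inductive cvtyp : cctx -> cval -> cty -> Prop :=
| cvt_id : forall G a A, lookup G a = Some A -> cvtyp G (cF a) A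
| cvt_lam : forall G M A B,
    (forall x, ~ In (Var x) (dom G) ->
       ctyp ((Var x, A) :: G) (copen_c 0 (cF (Var x)) M) B) ->
    cvtyp G (cLam M) (CFun A B)
| cvt_unit : forall G, cvtyp G cUnit CUnit
with ctyp : cctx -> ccomp -> cty -> Prop :=
| ct_app : forall G V W A B,
    cvtyp G V (CFun A B) -> cvtyp G W A -> ctyp G (cApp V W) B
| ct_let : forall G M N A B,
    ctyp G M A ->
    (forall x, ~ In (Var x) (dom G) ->
       ctyp ((Var x, A) :: G) (copen_c 0 (cF (Var x)) N) B) ->
    ctyp G (cLet M N) B
| ct_ret : forall G V A, cvtyp G V A -> ctyp G (cRet V) A
| ct_give : forall G V W A,
    cvtyp G V A -> cvtyp G W (CChan A) -> ctyp G (cGive V W) CUnit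
| ct_take : forall G V A, cvtyp G V (CChan A) -> ctyp G (cTake V) A
| ct_fork : forall G M, ctyp G M CUnit -> ctyp G (cFork M) CUnit
| ct_newch : forall G A, ctyp G cNewCh (CChan A).

Fixpoint tr_ty (A : aty) : cty :=
  match A with
  | AUnit => CUnit
  | AFun A C B => CFun (tr_ty A) (CFun (CChan (tr_ty C)) (tr_ty B))
  | ARef A => CChan (tr_ty A)
  end.

Definition tr_ctx (G : actx) : cctx := map (fun p => (fst p, tr_ty (snd p))) G.

(* shifting of target values (used for the channel parameter ch when the
   translation goes under a binder) *)
Fixpoint cshift_v (c : nat) (V : cval) : cval :=
  match V with
  | cB n => if Nat.ltb n c then cB n else cB (S n)
  | cF a => cF a
  | cLam M => cLam (cshift_c (S c) M)
  | cUnit => cUnit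
  end
with cshift_c (c : nat) (M : ccomp) : ccomp :=
  match M with
  | cApp V W => cApp (cshift_v c V) (cshift_v c W)
  | cLet M N => cLet (cshift_c c M) (cshift_c (S c) N)
  | cRet V => cRet (cshift_v c V)
  | cFork M => cFork (cshift_c c M)
  | cGive V W => cGive (cshift_v c V) (cshift_v c W)
  | cTake V => cTake (cshift_v c V)
  | cNewCh => cNewCh
  end.

Definition up (r : nat -> nat) (n : nat) : nat :=
  match n with 0 => 0 | S m => S (r m) end.

(* [tr_v r V] / [tr_c r M ch]: the translation, where the renaming r maps
   source bound indices to target bound indices (needed because the
   translation introduces the fresh binders ch, f, chMb, y). *)
Fixpoint tr_v (r : nat -> nat) (V : aval) : cval :=
  match V with
  | aB n => cB (r n)
  | aF a => cF a
  | aUnit => cUnit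
  (* [[lam x. M]] = lam x. lam ch. ([[M]] ch), where (fine-grain CBV)
     lam x. lam ch. N abbreviates lam x. return (lam ch. N) *)
  | aLam M => cLam (cRet (cLam (tr_c (fun n => S (up r n)) M (cB 0))))
  end
with tr_c (r : nat -> nat) (M : acomp) (ch : cval) : ccomp :=
  match M with
  | aLet M N => cLet (tr_c r M ch) (tr_c (up r) N (cshift_v 0 ch))
  (* let f <= ([[V]] [[W]]) in f ch *)
  | aApp V W => cLet (cApp (tr_v r V) (tr_v r W)) (cApp (cB 0) (cshift_v 0 ch))
  | aRet V => cRet (tr_v r V)
  | aSelf => cRet ch
  | aReceive => cTake ch
  (* let chMb <= newCh in (let y <= fork ([[M]] chMb) in return chMb) *)
  | aSpawn M => cLet cNewCh
                  (cLet (cFork (tr_c (fun n => S (r n)) M (cB 0))) (cRet (cB 1)))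
  | aSend V W => cGive (tr_v r V) (tr_v r W)
  end.

Definition trV (V : aval) : cval := tr_v (fun n => n) V.
Definition trM (M : acomp) (ch : cval) : ccomp := tr_c (fun n => n) M ch.

(* The translation is compositional, so both claims follow by one mutual
   induction on typing derivations, generalised to an arbitrary renaming r of
   bound indices, an arbitrary mailbox name of type Chan [[B]], and any target
   context containing the translation of every source binding (the binders
   ch, f, chMb, y introduced by the translation force this weakening).  The
   only real work is that opening a binder commutes with the translation: the
   source index opened is the unique one that r sends to the target index
   opened, and opening a binder of the translation itself touches no source
   index at all. *)
From Stdlib Require Import List Arith Lia.

Scheme aval_mut := Induction for aval Sort Prop
with acomp_mut := Induction for acomp Sort Prop.
Combined Scheme aterm_mutind from aval_mut, acomp_mut.

Scheme avtyp_mut := Induction for avtyp Sort Prop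
with actyp_mut := Induction for actyp Sort Prop.
Combined Scheme atyping_mutind from avtyp_mut, actyp_mut.

Definition atomic (ch : cval) : Prop :=
  match ch with cB _ | cF _ => True | _ => False end.

Lemma atomic_cshift ch : atomic ch -> atomic (cshift_v 0 ch).
Proof. destruct ch; simpl; auto. Qed.

Lemma copen_cshift_atomic ch k u : atomic ch ->
  copen_v (S k) (cF u) (cshift_v 0 ch) = cshift_v 0 (copen_v k (cF u) ch).
Proof.
  destruct ch; simpl; intros Hch; try contradiction; auto.
  destruct (Nat.eqb n k); reflexivity.
Qed.

Definition hits (r : nat -> nat) (k j : nat) : Prop := forall n, r n = k <-> n = j.

Definition misses (r : nat -> nat) (k : nat) : Prop := forall n, r n <> k.

Lemma hits_up r k j : hits r k j -> hits (up r) (S k) (S j).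
Proof. intros Hr [|n]; simpl; [lia|]. specialize (Hr n); lia. Qed.

Lemma hits_up_0 r : hits (up r) 0 0.
Proof. intros [|n]; simpl; lia. Qed.

Lemma hits_succ r k j : hits r k j -> hits (fun n => S (r n)) (S k) j.
Proof. intros Hr n. specialize (Hr n); lia. Qed.

Lemma misses_up r k : misses r k -> misses (up r) (S k).
Proof. intros Hr [|n]; simpl; [lia|]. specialize (Hr n); lia. Qed.

Lemma misses_succ r k : misses r k -> misses (fun n => S (r n)) (S k).
Proof. intros Hr n. specialize (Hr n); lia. Qed.

Lemma misses_succ_0 r : misses (fun n => S (r n)) 0.
Proof. intros n; lia. Qed.

Lemma copen_tr_hits :
  (forall V r k j u, hits r k j ->
     copen_v k (cF u) (tr_v r V) = tr_v r (aopen_v j (aF u) V)) /\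
  (forall M r k j u ch, hits r k j -> atomic ch ->
     copen_c k (cF u) (tr_c r M ch) =
     tr_c r (aopen_c j (aF u) M) (copen_v k (cF u) ch)).
Proof.
  apply (aterm_mutind
    (fun V => forall r k j u, hits r k j ->
       copen_v k (cF u) (tr_v r V) = tr_v r (aopen_v j (aF u) V))
    (fun M => forall r k j u ch, hits r k j -> atomic ch ->
       copen_c k (cF u) (tr_c r M ch) =
       tr_c r (aopen_c j (aF u) M) (copen_v k (cF u) ch)));
    simpl; intros.
  - specialize (H n).
    destruct (Nat.eqb_spec n j), (Nat.eqb_spec (r n) k); simpl; intuition.
  - reflexivity.
  - rewrite H with (j := S j); simpl; auto using hits_succ, hits_up.
  - reflexivity.
  - rewrite H with (j := j), H0 with (j := j), copen_cshift_atomic; auto.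
  - rewrite H with (j := j), H0 with (j := S j), copen_cshift_atomic;
      auto using hits_up, atomic_cshift.
  - rewrite H with (j := j); auto.
  - rewrite H with (j := j); simpl; auto using hits_succ.
  - rewrite H with (j := j), H0 with (j := j); auto.
  - reflexivity.
  - reflexivity.
Qed.

Lemma copen_tr_misses :
  (forall V r k u, misses r k -> copen_v k (cF u) (tr_v r V) = tr_v r V) /\
  (forall M r k u ch, misses r k -> atomic ch ->
     copen_c k (cF u) (tr_c r M ch) = tr_c r M (copen_v k (cF u) ch)).
Proof.
  apply (aterm_mutind
    (fun V => forall r k u, misses r k -> copen_v k (cF u) (tr_v r V) = tr_v r V)
    (fun M => forall r k u ch, misses r k -> atomic ch ->
       copen_c k (cF u) (tr_c r M ch) = tr_c r M (copen_v k (cF u) ch)));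
    simpl; intros.
  - destruct (Nat.eqb_spec (r n) k); [exfalso; eapply H; eauto | reflexivity].
  - reflexivity.
  - rewrite H; simpl; auto using misses_succ, misses_up.
  - reflexivity.
  - rewrite H, H0, copen_cshift_atomic; auto.
  - rewrite H, H0, copen_cshift_atomic; auto using misses_up, atomic_cshift.
  - rewrite H; auto.
  - rewrite H; simpl; auto using misses_succ.
  - rewrite H, H0; auto.
  - reflexivity.
  - reflexivity.
Qed.

Lemma lookup_in_dom {T} (G : list (ident * T)) a t :
  lookup G a = Some t -> In a (dom G).
Proof.
  induction G as [|[b s] G IH]; simpl; intros H; try discriminate.
  destruct (ident_eq_dec a b); auto.
Qed.

Lemma in_dom_lookup {T} (G : list (ident * T)) a :
  In a (dom G) -> exists t, lookup G a = Some t.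
Proof.
  induction G as [|[b s] G IH]; simpl; intros H; try contradiction.
  destruct (ident_eq_dec a b); eauto.
  destruct H; [congruence | auto].
Qed.

Lemma lookup_cons_eq {T} (D : list (ident * T)) x t :
  lookup ((x, t) :: D) x = Some t.
Proof. simpl. destruct (ident_eq_dec x x); congruence. Qed.

Lemma lookup_cons_fresh {T} (D : list (ident * T)) x t a s :
  ~ In x (dom D) -> lookup D a = Some s -> lookup ((x, t) :: D) a = Some s.
Proof.
  intros Hx H; simpl. destruct (ident_eq_dec a x); auto.
  subst. exfalso. eapply Hx, lookup_in_dom; eauto.
Qed.

Lemma lookup_tr_ctx G a : lookup (tr_ctx G) a = option_map tr_ty (lookup G a).
Proof.
  induction G as [|[b s] G IH]; simpl; auto.
  destruct (ident_eq_dec a b); auto.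
Qed.

Lemma dom_tr_ctx G : dom (tr_ctx G) = dom G.
Proof. unfold dom, tr_ctx. rewrite map_map. reflexivity. Qed.

Definition ctx_embeds (G : actx) (D : cctx) : Prop :=
  forall a T, lookup G a = Some T -> lookup D a = Some (tr_ty T).

Lemma ctx_embeds_tr_ctx G : ctx_embeds G (tr_ctx G).
Proof. intros a T E. rewrite lookup_tr_ctx, E. reflexivity. Qed.

Lemma ctx_embeds_fresh G D x : ctx_embeds G D -> ~ In x (dom D) -> ~ In x (dom G).
Proof.
  intros He Hx Hin. apply in_dom_lookup in Hin as [t Ht].
  eapply Hx, lookup_in_dom, He, Ht.
Qed.

Lemma ctx_embeds_cons G D x A :
  ctx_embeds G D -> ctx_embeds ((x, A) :: G) ((x, tr_ty A) :: D).
Proof.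
  intros He a T; simpl. destruct (ident_eq_dec a x); auto.
  intros E; injection E as <-; reflexivity.
Qed.

Lemma ctx_embeds_weaken G D y C :
  ctx_embeds G D -> ~ In y (dom D) -> ctx_embeds G ((y, C) :: D).
Proof. intros He Hy a T H. apply lookup_cons_fresh, He; auto. Qed.

Lemma tr_preserves_typing :
  (forall G V A, avtyp G V A ->
     forall r D, ctx_embeds G D -> cvtyp D (tr_v r V) (tr_ty A)) /\
  (forall G B M A, actyp G B M A ->
     forall r D a, ctx_embeds G D -> lookup D a = Some (CChan (tr_ty B)) ->
     ctyp D (tr_c r M (cF a)) (tr_ty A)).
Proof.
  apply (atyping_mutind
    (fun G V A _ => forall r D, ctx_embeds G D -> cvtyp D (tr_v r V) (tr_ty A))
    (fun G B M A _ => forall r D a, ctx_embeds G D ->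
       lookup D a = Some (CChan (tr_ty B)) -> ctyp D (tr_c r M (cF a)) (tr_ty A)));
    simpl; intros.
  - constructor. auto.
  - apply cvt_lam. intros x Hx. simpl.
    rewrite (proj2 copen_tr_hits) with (j := 0);
      simpl; auto using hits_succ, hits_up_0.
    apply ct_ret, cvt_lam. intros ch Hch.
    rewrite (proj2 copen_tr_misses); simpl; auto using misses_succ_0.
    apply H; [eapply ctx_embeds_fresh; eauto | | apply lookup_cons_eq].
    apply ctx_embeds_weaken; [apply ctx_embeds_cons |]; auto.
  - constructor.
  - eapply ct_let; [eapply ct_app; eauto |].
    intros f Hf. simpl.
    eapply ct_app; constructor; [apply lookup_cons_eq | apply lookup_cons_fresh; auto].
  - eapply ct_let; eauto.
    intros x Hx.
    rewrite (proj2 copen_tr_hits) with (j := 0); simpl; auto using hits_up_0.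
    apply H0; [eapply ctx_embeds_fresh; eauto | apply ctx_embeds_cons |
               apply lookup_cons_fresh]; auto.
  - constructor. auto.
  - eapply ct_give; eauto.
  - do 2 constructor. auto.
  - eapply ct_let; [apply ct_newch |].
    intros chMb Hmb. simpl.
    eapply ct_let with (A := CUnit).
    + apply ct_fork.
      rewrite (proj2 copen_tr_misses); simpl; auto using misses_succ_0.
      apply H; [apply ctx_embeds_weaken | apply lookup_cons_eq]; auto.
    + intros y Hy. simpl. do 2 constructor.
      apply lookup_cons_fresh, lookup_cons_eq; auto.
  - do 2 constructor. auto.
Qed.

Theorem lemma17 :
  (forall (G : actx) (V : aval) (A : aty),
      avtyp G V A -> cvtyp (tr_ctx G) (trV V) (tr_ty A)) /\
  (forall (G : actx) (B : aty) (M : acomp) (A : aty) (alpha : ident),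
      actyp G B M A -> ~ In alpha (dom G) ->
      ctyp ((alpha, CChan (tr_ty B)) :: tr_ctx G) (trM M (cF alpha)) (tr_ty A)).
Proof.
  split.
  - intros G V A HV.
    apply (proj1 tr_preserves_typing G V A HV), ctx_embeds_tr_ctx.
  - intros G B M A alpha HM Halpha.
    apply (proj2 tr_preserves_typing G B M A HM).
    + apply ctx_embeds_weaken; [apply ctx_embeds_tr_ctx | now rewrite dom_tr_ctx].
    + apply lookup_cons_eq.
Qed.
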